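(* Assume the Hashimoto matrix $B$ is irreducible, $\mathbf{p}\in(0,1]^E$, and $\rho:=\rho\big(B^T\mathrm{diag}(\mathbf{p})\big)>1$. Then there exists $\mathbf{Q}\in[0,1]^E\setminus\{\mathbf{1}\}$ with $\mathbf{Q}=\mathbf{F}(\mathbf{Q};\mathbf{p})$.
   Context: $\mathcal{G}=(V,E)$ is a finite directed graph, edges written $i\to j$, $M=|E|$; $\mathcal{N}^-(j)=\{k:\,k\to j\in E\}$. The Hashimoto matrix is $B_{i\to j,\,k\to l}=\delta_{jk}(1-\delta_{il})$; irreducibility means the directed graph on $E$ with an arc $e\to e'$ whenever $B_{e,e'}\neq0$ is strongly connected. $\rho$ denotes spectral radius. For $\mathbf{p}\in[0,1]^E$, $\mathbf{F}(\cdot;\mathbf{p}):[0,1]^E\to[0,1]^E$ is defined componentwise: for the edge $j\to i$, $$F_{j\to i}(\mathbf{y};\mathbf{p})=\prod_{k\in\mathcal{N}^-(j)\setminus\{i\}}\big(1-p_{k\to j}+p_{k\to j}\,y_{k\to j}\big)$$ (empty product $=1$); its Jacobian at $\mathbf{1}$ is $B^T\mathrm{diag}(\mathbf{p})$. $\mathbf{1}$ is the all-ones vector, always a fixed point of $\mathbf{F}$. *)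

From HB Require Import structures.
From mathcomp Require Import all_boot all_order all_algebra.
From mathcomp Require Import fingraph.
From mathcomp Require Import boolp classical_sets reals.
From mathcomp Require Import complex.

Set Implicit Arguments.
Unset Strict Implicit.
Unset Printing Implicit Defensive.

Import Order.TTheory GRing.Theory Num.Theory.
Local Open Scope ring_scope.
Local Open Scope classical_set_scope.

Definition edge (V : finType) (adj : rel V) := {e : V * V | adj e.1 e.2}.

Section Hashimoto.
Variables (V : finType) (adj : rel V).
Local Notation E := (edge adj).

Definition etail (e : E) : V := (val e).1.
Definition ehead (e : E) : V := (val e).2.

Definition hashimoto (R : pzRingType) (e f : E) : R :=
  ((ehead e == etail f) && (etail e != ehead f))%:R.

(* irreducibility: the digraph on E with an arc e -> f whenever B_{e,f} <> 0
   is strongly connected *)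
Definition hashimoto_irreducible (R : pzRingType) : Prop :=
  forall e f : E, connect (fun x y : E => hashimoto R x y != 0) e f.

(* The |E| x |E| matrix B^T diag(p), indexed through an enumeration of E *)
Definition jacobian (R : pzRingType) (p : E -> R) : 'M[R]_#|{: E}| :=
  \matrix_(i, j) (hashimoto R (enum_val j) (enum_val i) * p (enum_val j)).

(* F(y; p) componentwise: for the edge j -> i, the product over
   k in N^-(j) \ {i} of (1 - p_{k->j} + p_{k->j} y_{k->j}) *)
Definition Fmap (R : pzRingType) (p y : E -> R) (e : E) : R :=
  \prod_(f : E | (ehead f == etail e) && (etail f != ehead e))
     (1 - p f + p f * y f).

End Hashimoto.

Definition cmod (R : rcfType) (z : R[i]) : R :=
  let: Complex a b := z in Num.sqrt (a ^+ 2 + b ^+ 2).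

Definition spectral_radius (R : realType) (n : nat) (A : 'M[R]_n) : R :=
  sup [set cmod z | z in [set z : R[i] |
        eigenvalue (map_mx (fun x : R => (x%:C)%C) A) z]].

From HB Require Import structures.
From mathcomp Require Import all_boot all_order all_algebra.
From mathcomp Require Import fingraph.
From mathcomp Require Import boolp classical_sets reals.
From mathcomp Require Import complex.
From mathcomp Require Import ring lra.
Import Order.TTheory GRing.Theory Num.Theory.
Local Open Scope ring_scope.
Local Open Scope classical_set_scope.
Set Implicit Arguments.
Unset Strict Implicit.

(* Write L = B^T diag(p), acting on x : E -> R by
   (L x)_e = \sum_f B_{f,e} p_f x_f, so that L is the Jacobian of F at 1.
   1. Since rho(L) > 1, L has a complex eigenvalue z with mu := |z| > 1; the
      moduli u of an eigenvector are nonnegative, not all zero, and satisfy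
      mu u <= L u (triangle inequality).
   2. Irreducibility of B lets such a subinvariant vector spread to every
      edge: summing the iterates L^k u gives v > 0 with mu v <= L v.
   3. For small eps > 0 the vector b := 1 - eps v satisfies 0 <= b < 1 and
      F(b) <= b: to second order F(1 - eps v) = 1 - eps L v, and
      eps L v >= mu eps v beats the quadratic error.
   4. F is monotone on nonnegative vectors and F(0) >= 0, so the supremum Q
      of the vectors x in [0, b] with x <= F(x) is a fixed point of F
      (Knaster-Tarski); Q <= b < 1 gives Q <> 1.
   Steps 1, 2 and 4 are proved for arbitrary nonnegative matrices, kernels
   and monotone maps; step 3 is specific to F. *)

Lemma cmodE (R : rcfType) (z : R[i]) : cmod z = complex.Re `|z|.
Proof. by case: z => a b; rewrite normc_def. Qed.

Lemma normC_Re (R : rcfType) (z : R[i]) : `|z| = ((complex.Re `|z|)%:C)%C.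
Proof. by rewrite {1}normc_def normc_def. Qed.

Lemma Re_norm_ge0 (R : rcfType) (z : R[i]) : 0 <= complex.Re `|z|.
Proof. by have := normr_ge0 z; rewrite {1}normC_Re lecR. Qed.

(* MathComp eigenvectors are row vectors (v A = a v); an eigenvalue also has a
   column eigenvector, since A and A^T have the same characteristic equation. *)
Lemma eigenvalue_column_eigenvector (F : fieldType) n (A : 'M[F]_n) a :
  eigenvalue A a ->
  exists2 w : 'rV[F]_n, w != 0 & forall i, \sum_j A i j * w 0 j = a * w 0 i.
Proof.
move=> /eigenvalueP [v Hv v0].
have : \det (A - a%:M) == 0.
  by apply/det0P; exists v => //; rewrite mulmxBr Hv mul_mx_scalar subrr.
rewrite -det_tr => /det0P [w w0 Hw]; exists w => // i.
have := congr1 (fun M : 'M_(1, n) => M 0 i) Hw; rewrite !mxE.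
rewrite (eq_bigr (fun j => w 0 j * A i j - w 0 j * a%:M i j)) => [|j _]; last first.
  by rewrite !mxE mulrBr.
have diag : \sum_j w 0 j * a%:M i j = a * w 0 i.
  rewrite (bigD1 i) //= big1 ?addr0 => [|j /negbTE ji].
    by rewrite mxE eqxx mulr1n mulrC.
  by rewrite mxE eq_sym ji mulr0.
rewrite sumrB diag => /eqP; rewrite subr_eq0 => /eqP <-.
by apply: eq_bigr => j _; rewrite mulrC.
Qed.

Lemma spectral_subinvariant (R : realType) n (A : 'M[R]_n) :
  (forall i j, 0 <= A i j) -> 1 < spectral_radius A ->
  exists mu (u : 'I_n -> R), [/\ 1 < mu, forall i, 0 <= u i,
    exists i, u i != 0 & forall i, mu * u i <= \sum_j A i j * u j].
Proof.
move=> A0; rewrite /spectral_radius; set S := [set _ | _ in _].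
have [S0|S0] := pselect (S !=set0); last first.
  have -> : S = set0 by apply/seteqP; split => x // Sx; case: S0; exists x.
  by rewrite sup0 ltr10.
move=> /(sup_gt S0) [_ [z /= Hz <-]]; rewrite cmodE => mu1.
have [w w0 Hw] := eigenvalue_column_eigenvector Hz.
exists (complex.Re `|z|), (fun i => complex.Re `|w 0 i|); split => //.
- by move=> i; apply: Re_norm_ge0.
- have /rV0Pn [i wi] := w0; exists i.
  by apply: contra wi => /eqP H; rewrite -normr_eq0 normC_Re H.
- move=> i; rewrite -lecR rmorphM /= -!normC_Re -normrM -Hw rmorph_sum /=.
  apply: (le_trans (ler_norm_sum _ _ _)); apply: ler_sum => j _.
  by rewrite !mxE normrM rmorphM /= -normC_Re ger0_norm // lecR.
Qed.

Section PositiveSubinvariant.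
Variables (R : realFieldType) (T : finType) (a : T -> T -> R) (r : rel T).
Hypothesis a_ge0 : forall e f, 0 <= a e f.
Hypothesis a_gt0 : forall e f, r f e -> 0 < a e f.
Hypothesis r_connected : forall e f, connect r e f.
Variable mu : R.

Definition kernel_op (x : T -> R) (e : T) : R := \sum_f a e f * x f.

Definition subinvariant (x : T -> R) : Prop :=
  (forall e, 0 <= x e) /\ forall e, mu * x e <= kernel_op x e.

Lemma kernel_op_ge0 x : (forall e, 0 <= x e) -> forall e, 0 <= kernel_op x e.
Proof. by move=> x0 e; apply: sumr_ge0 => f _; apply: mulr_ge0. Qed.

Lemma subinvariant_op x : subinvariant x -> subinvariant (kernel_op x).
Proof.
move=> [x0 xL]; split; first exact: kernel_op_ge0.
move=> e; rewrite /kernel_op mulr_sumr; apply: ler_sum => f _.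
by rewrite mulrCA; apply: ler_wpM2l.
Qed.

Lemma subinvariant_iter x k : subinvariant x -> subinvariant (iter k kernel_op x).
Proof. by move=> sx; elim: k => //= k IH; apply: subinvariant_op. Qed.

Lemma subinvariant_sum (X : T -> T -> R) : (forall g, subinvariant (X g)) ->
  subinvariant (fun e => \sum_g X g e).
Proof.
move=> sX; split=> [e|e]; first by apply: sumr_ge0 => g _; case: (sX g).
rewrite mulr_sumr; apply: (le_trans (ler_sum _ (fun g _ => (sX g).2 e))).
rewrite [leRHS]/kernel_op exchange_big /=.
by under [leRHS]eq_bigr do rewrite mulr_sumr.
Qed.

Lemma iter_op_reaches x e0 : subinvariant x -> 0 < x e0 ->
  forall e, exists k, 0 < iter k kernel_op x e.
Proof.
move=> sx x_e0 e; have /connectP [s rs ->] := r_connected e0 e.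
have : exists k, 0 < iter k kernel_op x e0 by exists 0%N.
elim: s e0 rs {x_e0} => [|g s IH] y //= /andP [ryg rs] [k Hk].
apply: (IH g rs); exists k.+1 => /=.
rewrite /kernel_op (bigD1 y) //= ltr_wpDr ?mulr_gt0 ?a_gt0 //.
apply: sumr_ge0 => f _; apply: mulr_ge0 => //.
by case: (subinvariant_iter k sx).
Qed.

(* Summing, over all target points g, an iterate positive at g gives a
   positive subinvariant vector. *)
Lemma subinvariant_positive (u : T -> R) : subinvariant u ->
  (exists e, u e != 0) -> exists v, (forall e, 0 < v e) /\ subinvariant v.
Proof.
move=> su [e0 ue0].
have u_e0 : 0 < u e0 by rewrite lt_def ue0 (su.1 e0).
have [k Hk] := fin_all_exists (iter_op_reaches su u_e0).
exists (fun e => \sum_g iter (k g) kernel_op u e); split; last first.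
  by apply: subinvariant_sum => g; apply: subinvariant_iter.
move=> e; rewrite (bigD1 e) //=; apply: ltr_wpDr => //.
by apply: sumr_ge0 => g _; case: (subinvariant_iter (k g) su).
Qed.
End PositiveSubinvariant.

Lemma prod_one_sub_le (R : realFieldType) (I : Type) (s : seq I) (P : pred I)
    (a : I -> R) : (forall i, P i -> 0 <= a i <= 1) ->
  \prod_(i <- s | P i) (1 - a i) <=
    1 - \sum_(i <- s | P i) a i + (\sum_(i <- s | P i) a i) ^+ 2.
Proof.
move=> a01; elim: s => [|i s IH]; first by rewrite !big_nil expr0n /= subr0 addr0.
rewrite !big_cons; case: ifP => Pi //; have /andP [ai0 ai1] := a01 i Pi.
set t := \sum_(j <- s | P j) a j in IH *.
have t0 : 0 <= t by apply: sumr_ge0 => j /a01 /andP [].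
set q := \prod_(j <- s | P j) (1 - a j) in IH *.
have : (1 - a i) * q <= (1 - a i) * (1 - t + t ^+ 2).
  by apply: ler_wpM2l => //; rewrite subr_ge0.
by move=> /le_trans; apply; rewrite expr2; nra.
Qed.

Lemma uniform_scaling (R : realFieldType) (T : finType) (g : T -> R) c :
  0 < c -> (forall t, 0 <= g t) -> exists2 eps, 0 < eps & forall t, eps * g t <= c.
Proof.
move=> c0 g0; pose M := 1 + \sum_t g t.
have sum0 : 0 <= \sum_t g t by apply: sumr_ge0.
have M0 : 0 < M by rewrite ltr_wpDr.
exists (c / M) => [|t]; first by rewrite divr_gt0.
rewrite mulrAC ler_pdivrMr // ler_wpM2l ?(ltW c0) //.
by rewrite /M (bigD1 t) //= addrCA lerDl addr_ge0 // sumr_ge0.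
Qed.

(* Step 4 (Knaster-Tarski on the box [0, b]): a map that is monotone on
   nonnegative vectors, nonnegative at 0 and satisfies G b <= b has a fixed
   point in [0, b], namely the largest vector x in [0, b] with x <= G x. *)
Lemma monotone_fixpoint (R : realType) (T : Type) (G : (T -> R) -> T -> R)
    (b : T -> R) :
  (forall x y, (forall t, 0 <= x t <= y t) -> forall t, G x t <= G y t) ->
  (forall t, 0 <= G (fun _ => 0) t) -> (forall t, 0 <= b t) ->
  (forall t, G b t <= b t) ->
  exists Q, (forall t, 0 <= Q t <= b t) /\ (forall t, Q t = G Q t).
Proof.
move=> Gmono G0 b0 Gb.
have Gge0 x : (forall t, 0 <= x t) -> forall t, 0 <= G x t.
  by move=> x0 t; apply: le_trans (G0 t) (Gmono _ _ _ t) => s; rewrite lexx x0.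
pose S := [set x : T -> R | (forall t, 0 <= x t <= b t) /\
                            (forall t, x t <= G x t)].
have S0 : S (fun _ => 0) by split=> t; rewrite ?lexx ?b0 ?G0.
pose Q t := sup [set x t | x in S].
have hs t : has_sup [set x t | x in S].
  split; first by exists 0, (fun _ => 0).
  by exists (b t) => _ [x [/(_ t) /andP [] _ + _] <-].
have Q_ub x : S x -> forall t, x t <= Q t.
  by move=> Sx t; apply: sup_upper_bound (hs t) _ _; exists x.
have Q_lub t z : (forall x, S x -> x t <= z) -> Q t <= z.
  by move=> H; apply: ge_sup; [case: (hs t) | move=> _ [x Sx <-]; apply: H].
have Q0 t : 0 <= Q t by apply: Q_ub S0 t.
have Qb t : Q t <= b t by apply: Q_lub => x [/(_ t) /andP [] _ + _].
have QG t : Q t <= G Q t.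
  apply: Q_lub => x [Hx Gx]; apply: le_trans (Gx t) (Gmono _ _ _ t) => s.
  by case/andP: (Hx s) => -> _; apply: Q_ub.
have S_GQ : S (G Q).
  split=> t; last by apply: Gmono => s; rewrite Q0 QG.
  rewrite Gge0 //= (le_trans _ (Gb t)) //; apply: Gmono => s.
  by rewrite Q0 Qb.
exists Q; split=> t; first by rewrite Q0 Qb.
by apply/le_anti; rewrite QG Q_ub.
Qed.

Section NonBacktrackingMap.
Variables (R : realType) (V : finType) (adj : rel V) (p : edge adj -> R).
Hypothesis p01 : forall e, 0 < p e <= 1.
Local Notation E := (edge adj).

Let p_ge0 f : 0 <= p f. Proof. by case/andP: (p01 f) => /ltW. Qed.
Let p_le1 f : p f <= 1. Proof. by case/andP: (p01 f). Qed.

(* The entries of B select exactly the factors of F. *)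
Lemma hashimoto_sum (c : E -> R) e : \sum_f hashimoto R f e * c f =
  \sum_(f | (ehead f == etail e) && (etail f != ehead e)) c f.
Proof.
rewrite [RHS]big_mkcond; apply: eq_bigr => f _; rewrite /hashimoto.
by case: (_ && _); rewrite ?mul1r ?mul0r.
Qed.

Lemma hashimoto_ge0 (e f : E) : 0 <= hashimoto R e f.
Proof. exact: ler0n. Qed.

Lemma jacobian_subinvariant : 1 < spectral_radius (jacobian p) ->
  exists mu (u : E -> R), [/\ 1 < mu, forall e, 0 <= u e, exists e, u e != 0
    & forall e, mu * u e <= \sum_f hashimoto R f e * p f * u f].
Proof.
move=> rho1; have [|mu [u [mu1 u0 [i ui] Hu]]] := spectral_subinvariant _ rho1.
  by move=> i j; rewrite mxE mulr_ge0 ?hashimoto_ge0.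
exists mu, (fun e => u (enum_rank e)); split => // [|e].
  by exists (enum_val i); rewrite enum_valK.
apply: le_trans (Hu (enum_rank e)) _; rewrite (reindex (@enum_rank _)) /=.
  by under eq_bigr => f _ do rewrite mxE !enum_rankK.
by exists enum_val => x _; rewrite ?enum_rankK ?enum_valK.
Qed.

(* Step 2 for the kernel of B^T diag(p), whose positivity pattern is the
   (reversed) Hashimoto digraph. *)
Lemma jacobian_positive_subinvariant (u : E -> R) mu :
  hashimoto_irreducible adj R -> (forall e, 0 <= u e) -> (exists e, u e != 0) ->
  (forall e, mu * u e <= \sum_f hashimoto R f e * p f * u f) ->
  exists2 v : E -> R, forall e, 0 < v e
    & forall e, mu * v e <= \sum_f hashimoto R f e * p f * v f.
Proof.
move=> irr u0 u_nz Hu; pose a (e f : E) := hashimoto R f e * p f.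
have a0 e f : 0 <= a e f by rewrite mulr_ge0 ?hashimoto_ge0.
have ar e f : hashimoto R f e != 0 -> 0 < a e f.
  rewrite /a /hashimoto; case: (_ && _); rewrite ?eqxx //= mul1r => _.
  by case/andP: (p01 f).
have [v [v0 [_ Hv]]] := subinvariant_positive a0 ar irr (conj u0 Hu) u_nz.
by exists v.
Qed.

Lemma Fmap_factor_ge0 f y : 0 <= y -> 0 <= 1 - p f + p f * y.
Proof. by move=> y0; rewrite addr_ge0 ?mulr_ge0 ?subr_ge0. Qed.

Lemma Fmap_ge0 (x : E -> R) e : (forall f, 0 <= x f) -> 0 <= Fmap p x e.
Proof. by move=> x0; apply: prodr_ge0 => f _; apply: Fmap_factor_ge0. Qed.

Lemma Fmap_mono (x y : E -> R) : (forall f, 0 <= x f <= y f) ->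
  forall e, Fmap p x e <= Fmap p y e.
Proof.
move=> xy e; apply: ler_prod => f _; have /andP [x0 xy_f] := xy f.
by rewrite Fmap_factor_ge0 //= lerD2l ler_wpM2l.
Qed.

Lemma Fmap_one_sub_le (v : E -> R) mu eps e : 1 < mu -> (forall f, 0 < v f) ->
  mu * v e <= \sum_f hashimoto R f e * p f * v f -> 0 <= eps ->
  eps * (\sum_f hashimoto R f e * p f * v f) <= 1 - mu^-1 ->
  (forall f, eps * v f <= 1) ->
  Fmap p (fun f => 1 - eps * v f) e <= 1 - eps * v e.
Proof.
move=> mu1 v0; under eq_bigr do rewrite -mulrA; rewrite hashimoto_sum.
set L := \sum_(f | _) _ => Hmu eps0 HL ev1; rewrite /Fmap.
rewrite (eq_bigr (fun f => 1 - eps * (p f * v f))) => [|f _]; last by ring.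
apply: le_trans; first apply: prod_one_sub_le.
  move=> f _; rewrite !mulr_ge0 ?(ltW (v0 f)) //=; apply: le_trans (ev1 f).
  by rewrite ler_wpM2l // ler_piMl ?(ltW (v0 f)) ?p_le1.
rewrite -mulr_sumr -/L; set t := eps * L in HL *.
have mu0 : 0 < mu by apply: lt_trans mu1.
have t0 : 0 <= t.
  by rewrite mulr_ge0 // sumr_ge0 // => f _; rewrite mulr_ge0 ?(ltW (v0 f)) ?p_ge0.
have eps_v : eps * v e <= t / mu.
  by rewrite ler_pdivlMr // -mulrA [v e * _]mulrC ler_wpM2l.
have : t / mu <= t * (1 - t) by rewrite ler_wpM2l //; lra.
by rewrite expr2; nra.
Qed.

Lemma Fmap_supersolution (v : E -> R) mu : 1 < mu -> (forall f, 0 < v f) ->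
  (forall e, mu * v e <= \sum_f hashimoto R f e * p f * v f) ->
  exists b : E -> R, (forall e, 0 <= b e < 1) /\ (forall e, Fmap p b e <= b e).
Proof.
move=> mu1 v0 Hv; pose c := 1 - mu^-1.
have mu0 : 0 < mu by apply: lt_trans mu1.
have c0 : 0 < c by rewrite subr_gt0 invf_lt1.
have c1 : c < 1 by rewrite ltrBlDr ltrDl invr_gt0.
pose Lv e := \sum_f hashimoto R f e * p f * v f.
have Lv0 e : 0 <= Lv e.
  by apply: sumr_ge0 => f _; rewrite !mulr_ge0 ?hashimoto_ge0 ?(ltW (v0 f)).
have [eps eps0 small] := uniform_scaling (g := fun e => Lv e + v e) c0
  (fun e => addr_ge0 (Lv0 e) (ltW (v0 e))).
have eps_v e : eps * v e <= c.
  by apply: le_trans (small e); rewrite /= ler_pM2l // lerDr.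
exists (fun e => 1 - eps * v e); split=> e.
  by rewrite subr_ge0 gtrBl mulr_gt0 // (le_trans (eps_v e)) // ltW.
apply: (Fmap_one_sub_le mu1 v0 (Hv e) (ltW eps0)).
  by apply: le_trans (small e); rewrite /= ler_pM2l // lerDl ltW.
by move=> f; apply: le_trans (eps_v f) (ltW c1).
Qed.
End NonBacktrackingMap.

Unset Implicit Arguments.

Theorem theorem1 (R : realType) (V : finType) (adj : rel V)
    (p : edge adj -> R) :
  hashimoto_irreducible adj R ->
  (forall e, 0 < p e <= 1) ->
  1 < spectral_radius (jacobian p) ->
  exists Q : edge adj -> R,
    (forall e, 0 <= Q e <= 1) /\ Q <> (fun _ => 1) /\
    (forall e, Q e = Fmap p Q e).
Proof.
move=> irr p01 rho1.
have [mu [u [mu1 u0 [e0 u_e0] Hu]]] := jacobian_subinvariant p01 rho1.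
have [v v0 Hv] := jacobian_positive_subinvariant p01 irr u0 (ex_intro _ e0 u_e0) Hu.
have [b [b01 Fb]] := Fmap_supersolution p01 mu1 v0 Hv.
have b0 e : 0 <= b e by case/andP: (b01 e).
have [Q [Qb QF]] := monotone_fixpoint (Fmap_mono p01)
  (fun e => Fmap_ge0 p01 e (fun=> lexx 0)) b0 Fb.
have Q_lt1 e : Q e < 1 by case/andP: (Qb e) => _ /le_lt_trans; apply; case/andP: (b01 e).
exists Q; split; [|split] => // [e|Q1].
  by case/andP: (Qb e) => -> _; rewrite (ltW (Q_lt1 e)).
by have := Q_lt1 e0; rewrite Q1 ltxx.
Qed.
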